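(* Let $\mathcal T\colon\mathbb{R}^s\to\mathbb{R}^s$ be a diffeomorphism with Lipschitz constants $\mathrm{Lip}(\mathcal T)\le K$ and $\mathrm{Lip}(\mathcal T^{-1})\le L$, and let $P_Z=\mathcal N(0,I)$ be the standard normal distribution on $\mathbb{R}^s$. Then for every $\mathrm{p}\in\mathbb{R}^s$, $$\frac{1}{L^sK^s}\,\mathcal N\big(\mathrm{p}\,\big|\,\mathcal T(0),\tfrac{1}{L^2}I\big)\le p_{\mathcal T_\#P_Z}(\mathrm{p})\le L^sK^s\,\mathcal N\big(\mathrm{p}\,\big|\,\mathcal T(0),K^2I\big).$$
   Context: $\mathcal T_\#P_Z=P_Z\circ\mathcal T^{-1}$ is the push-forward of $P_Z$ under $\mathcal T$, and $p_{\mathcal T_\#P_Z}$ its density, given by $p_{\mathcal T_\#P_Z}(\mathrm p)=p_Z(\mathcal T^{-1}(\mathrm p))\,|\det(\nabla\mathcal T^{-1}(\mathrm p))|$ where $p_Z$ is the standard normal density. $\mathcal N(\mathrm p\mid \mu,\Sigma)$ denotes the density at $\mathrm p$ of the normal distribution with mean $\mu$ and covariance $\Sigma$. *)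

From HB Require Import structures.
From mathcomp Require Import all_boot all_order all_algebra.
From mathcomp Require Import all_classical all_reals all_analysis.
Set Implicit Arguments. Unset Strict Implicit. Unset Printing Implicit Defensive.
Import Order.TTheory GRing.Theory Num.Theory.
Import numFieldNormedType.Exports.
Local Open Scope ring_scope.

(* Euclidean norm on R^s (the library norm on matrices is the sup norm). *)
Definition eucl_norm (R : realType) (s : nat) (v : 'rV[R]_s) : R :=
  Num.sqrt (\sum_(i < s) (v ord0 i) ^+ 2).

Definition eucl_lipschitz (R : realType) (s : nat) (K : R)
    (f : 'rV[R]_s -> 'rV[R]_s) : Prop :=
  forall x y, eucl_norm (f x - f y) <= K * eucl_norm (x - y).

Definition diffeomorphism (R : realType) (s : nat)
    (f g : 'rV[R]_s -> 'rV[R]_s) : Prop :=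
  [/\ cancel f g, cancel g f,
      (forall x, differentiable f x), (forall x, differentiable g x) &
      (continuous (jacobian f) /\ continuous (jacobian g))].

Definition normal_iso_pdf (R : realType) (s : nat) (mu : 'rV[R]_s) (v : R)
    (p : 'rV[R]_s) : R :=
  (Num.sqrt (2 * pi * v))^-1 ^+ s * expR (- (eucl_norm (p - mu)) ^+ 2 / (2 * v)).

Definition std_normal_pdf (R : realType) (s : nat) (z : 'rV[R]_s) : R :=
  normal_iso_pdf 0 1 z.

(* density of the push-forward T_# P_Z, given by the change of variables
   formula p_Z(T^{-1} p) |det (grad T^{-1})(p)| ; Tinv is the inverse of T. *)
Definition pushforward_pdf (R : realType) (s : nat)
    (Tinv : 'rV[R]_s -> 'rV[R]_s) (p : 'rV[R]_s) : R :=
  std_normal_pdf (Tinv p) * `|\det (jacobian Tinv p)|.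

(* Put q := T^-1 p.  As T^-1 (T 0) = 0, the Lipschitz bounds give
   |q| <= L |p - T 0| and |p - T 0| <= K |q|, which compare the Gaussian factor
   p_Z(q) with the two rescaled Gaussians centred at T 0.  Each row of the
   Jacobian of an L-Lipschitz map is a directional derivative along a unit
   vector, hence has Euclidean norm at most L, and Hadamard's inequality
   bounds |det (grad T^-1)(p)| by L^s; applied to T, together with
   det (grad T^-1)(p) * det (grad T)(q) = 1, it bounds |det (grad T^-1)(p)|
   below by K^-s.  Hadamard's inequality comes from det M <= prod_i M_ii for
   the positive definite M = A A^T, by induction through Schur complements. *)

From HB Require Import structures.
From mathcomp Require Import all_boot all_order all_algebra.
From mathcomp Require Import all_classical all_reals all_analysis.
From mathcomp Require Import ring.
Set Implicit Arguments.
Unset Strict Implicit.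
Unset Printing Implicit Defensive.

Import Order.TTheory GRing.Theory Num.Theory.
Import numFieldNormedType.Exports.
Local Open Scope ring_scope.

Section EuclNorm.
Variables (R : realType) (n : nat).
Implicit Types (v : 'rV[R]_n) (k : R).

Lemma sum_sqr_ge0 v : 0 <= \sum_i v 0 i ^+ 2.
Proof. by apply: sumr_ge0 => i _; rewrite sqr_ge0. Qed.

Lemma eucl_norm_ge0 v : 0 <= eucl_norm v.
Proof. exact: sqrtr_ge0. Qed.

Lemma eucl_norm_sqr v : eucl_norm v ^+ 2 = \sum_i v 0 i ^+ 2.
Proof. exact/sqr_sqrtr/sum_sqr_ge0. Qed.

Lemma mulmx_tr_rvE v : (v *m v^T) 0 0 = eucl_norm v ^+ 2.
Proof. by rewrite eucl_norm_sqr mxE; apply: eq_bigr => i _; rewrite mxE expr2. Qed.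

Lemma eucl_norm_gt0 v : v != 0 -> 0 < eucl_norm v.
Proof.
move=> v0; rewrite sqrtr_gt0 lt_def sum_sqr_ge0 andbT.
apply: contra v0 => /eqP /psumr_eq0P sum0; apply/eqP/rowP => i.
have /eqP := sum0 (fun j _ => sqr_ge0 (v 0 j)) i isT.
by rewrite sqrf_eq0 mxE => /eqP.
Qed.

Lemma eucl_normZ k v : eucl_norm (k *: v) = `|k| * eucl_norm v.
Proof.
rewrite /eucl_norm -sqrtr_sqr -sqrtrM ?sqr_ge0 // mulr_sumr.
by congr Num.sqrt; apply: eq_bigr => i _; rewrite mxE exprMn.
Qed.

Lemma eucl_norm_delta (i : 'I_n) : eucl_norm (delta_mx 0 i : 'rV[R]_n) = 1.
Proof.
rewrite /eucl_norm (bigD1 i) //= big1 => [|j ji].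
  by rewrite !mxE !eqxx expr1n addr0 sqrtr1.
by rewrite !mxE (negbTE ji) andbF expr0n.
Qed.

Lemma eucl_norm_continuous : continuous (@eucl_norm R n).
Proof.
have sum_sqr_cont : continuous (\sum_i (fun w : 'rV[R]_n => w 0 i ^+ 2)).
  apply: (big_ind (fun g : 'rV[R]_n -> R => continuous g)) => [|g h gc hc|i _].
  - by move=> w; exact: cst_continuous.
  - by move=> w; apply: continuousD; [exact: gc | exact: hc].
  - by move=> w; apply: continuousM; apply: coord_continuous.
have -> : @eucl_norm R n = Num.sqrt \o \sum_i (fun w : 'rV[R]_n => w 0 i ^+ 2).
  by apply: funext => w /=; rewrite fct_sumE.
by move=> v; apply: continuous_comp; [exact: sum_sqr_cont | exact: sqrt_continuous].
Qed.

End EuclNorm.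

Section Hadamard.
Variable R : realType.

Definition posdefmx n (M : 'M[R]_n) : Prop :=
  forall x : 'rV_n, x != 0 -> 0 < (x *m M *m x^T) 0 0.

Lemma delta_mx_neq0 n (i : 'I_n) : (delta_mx 0 i : 'rV[R]_n) != 0.
Proof.
apply/eqP => /matrixP/(_ 0 i)/eqP; rewrite !mxE !eqxx /=.
by rewrite oner_eq0.
Qed.

Lemma posdefmx_diag_gt0 n (M : 'M[R]_n) : posdefmx M -> forall i, 0 < M i i.
Proof.
by move=> pdM i; move/(_ _ (delta_mx_neq0 i)): pdM; rewrite trmx_delta -rowE -colE !mxE.
Qed.

Definition schur_compl n (M : 'M[R]_(1 + n)) : 'M[R]_n :=
  drsubmx M - (M 0 0)^-1 *: ((ursubmx M)^T *m ursubmx M).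

Section SchurComplement.
Variables (n : nat) (M : 'M[R]_(1 + n)).
Hypothesis symM : M^T = M.

Let c := M 0 0.
Let b := ursubmx M.

Lemma sym_block_mxE : M = block_mx c%:M b b^T (drsubmx M).
Proof.
have -> : c%:M = ulsubmx M.
  rewrite [RHS]mx11_scalar !mxE; congr (_%:M); congr (M _ _); exact/val_inj.
by rewrite /b trmx_ursub symM submxK.
Qed.

Lemma schur_compl_sym : (schur_compl M)^T = schur_compl M.
Proof.
by rewrite linearB /= linearZ /= trmx_mul trmxK trmx_drsub symM.
Qed.

Lemma det_schur_compl : c != 0 -> \det M = c * \det (schur_compl M).
Proof.
move=> c0; have factor : M = block_mx 1%:M 0 (c^-1 *: b^T) 1%:M *m block_mx c%:M b 0 (schur_compl M).
  rewrite [LHS]sym_block_mxE mulmx_block !mul1mx !mul0mx !addr0.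
  by rewrite mul_mx_scalar scalerA mulfV // scale1r -scalemxAl addrC subrK.
by rewrite {1}factor det_mulmx det_lblock det_ublock !det1 !mul1r det_scalar1.
Qed.

Hypothesis pdM : posdefmx M.

Let c_gt0 : 0 < c. Proof. exact: posdefmx_diag_gt0. Qed.

(* The quadratic form of [M] at [(- c^-1 y b^T, y)] is that of the Schur
   complement at [y]. *)
Lemma posdefmx_schur_compl : posdefmx (schur_compl M).
Proof.
move=> y y0; pose x : 'rV_(1 + n) := row_mx (- c^-1 *: (y *m b^T)) y.
have x0 : x != 0.
  apply: contraNneq y0 => x0.
  by rewrite -(row_mxKr (- c^-1 *: (y *m b^T)) y) -/x x0 linear0.
have -> : y *m schur_compl M *m y^T = x *m M *m x^T; last exact: pdM.
rewrite [in RHS]sym_block_mxE mul_row_block tr_row_mx mul_row_col.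
rewrite mul_mx_scalar scalerA mulrN mulfV ?gt_eqF // scaleN1r addNr mul0mx add0r.
rewrite /schur_compl mulmxBr mulmxBl mulmxDl -!mulmxA scalemxAl scalemxAr -!scalemxAl.
by rewrite addrC; congr (_ + _); rewrite -scalemxAr -scalemxAl -scalemxAr scaleNr !mulmxA.
Qed.

Lemma schur_compl_diag_le j : schur_compl M j j <= M (lift 0 j) (lift 0 j).
Proof.
rewrite !mxE lerBlDr big_ord1 !mxE.
have -> : M (lshift n 0) (rshift 1 j) = M 0 (lift 0 j) by congr (M _ _); exact/val_inj.
rewrite (_ : rshift 1 j = lift 0 j); last exact/val_inj.
rewrite lerDl -expr2 mulr_ge0 ?sqr_ge0 // invr_ge0.
exact: ltW.
Qed.

End SchurComplement.

Lemma det_le_prod_diag n (M : 'M[R]_n) :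
  M^T = M -> posdefmx M -> \det M <= \prod_i M i i.
Proof.
elim: n M => [|n IH] M symM pdM; first by rewrite det_mx00 big_ord0.
have c_gt0 := posdefmx_diag_gt0 pdM 0.
rewrite big_ord_recl (det_schur_compl symM (lt0r_neq0 c_gt0)) ler_pM2l //.
apply: le_trans (IH _ (schur_compl_sym symM) (posdefmx_schur_compl symM pdM)) _.
apply: ler_prod => j _.
by rewrite (ltW (posdefmx_diag_gt0 (posdefmx_schur_compl symM pdM) _)) schur_compl_diag_le.
Qed.

Lemma mulmx_tr_diagE m n (A : 'M[R]_(m, n)) i :
  (A *m A^T) i i = eucl_norm (row i A) ^+ 2.
Proof. by rewrite eucl_norm_sqr mxE; apply: eq_bigr => j _; rewrite !mxE expr2. Qed.

Lemma posdefmx_mulmx_tr n (A : 'M[R]_n) : A \in unitmx -> posdefmx (A *m A^T).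
Proof.
move=> Au x x0; rewrite mulmxA -[_ *m x^T]mulmxA -trmx_mul mulmx_tr_rvE.
rewrite exprn_gt0 // eucl_norm_gt0 //.
by apply: contraNneq x0 => xA0; rewrite -(mulmxK Au x) xA0 mul0mx.
Qed.

Lemma hadamard_ineq n (A : 'M[R]_n) : `|\det A| <= \prod_i eucl_norm (row i A).
Proof.
have [Au|] := boolP (A \in unitmx); last first.
  rewrite unitmxE unitfE negbK => /eqP ->; rewrite normr0.
  by apply: prodr_ge0 => i _; exact: eucl_norm_ge0.
rewrite -ler_sqr ?nnegrE ?normr_ge0 //; last by apply: prodr_ge0 => i _; exact: eucl_norm_ge0.
rewrite real_normK ?num_real // -prodrXl expr2 -{2}det_tr -det_mulmx.
under eq_bigr do rewrite -mulmx_tr_diagE.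
apply: det_le_prod_diag; last exact: posdefmx_mulmx_tr.
by rewrite trmx_mul trmxK.
Qed.

Lemma det_le_row_bound n (A : 'M[R]_n) L :
  (forall i, eucl_norm (row i A) <= L) -> `|\det A| <= L ^+ n.
Proof.
move=> rowL; apply: le_trans (hadamard_ineq A) _.
rewrite -[n in L ^+ n]card_ord -prodr_const.
by apply: ler_prod => i _; rewrite eucl_norm_ge0 rowL.
Qed.

End Hadamard.

Section JacobianComp.
Variable R : numFieldType.

Lemma jacobian_comp m n p (f : 'rV[R]_m -> 'rV[R]_n) (g : 'rV[R]_n -> 'rV[R]_p) a :
  differentiable f a -> differentiable g (f a) ->
  jacobian (g \o f) a = jacobian f a *m jacobian g (f a).
Proof.
move=> df dg; apply/row_matrixP => i.
by rewrite !rowE mulmxA /jacobian !mul_rV_lin1 diff_comp.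
Qed.

Lemma jacobian_id n (a : 'rV[R]_n) : jacobian id a = 1%:M.
Proof.
apply/row_matrixP => i; rewrite !rowE /jacobian mul_rV_lin1 mulmx1.
by rewrite diff_val.
Qed.

Lemma det_jacobian_cancel n (f g : 'rV[R]_n -> 'rV[R]_n) a :
  cancel g f -> differentiable g a -> differentiable f (g a) ->
  \det (jacobian g a) * \det (jacobian f (g a)) = 1.
Proof.
move=> gK dg df; rewrite -det_mulmx -jacobian_comp //.
have -> : f \o g = id by apply: funext => x /=; rewrite gK.
by rewrite jacobian_id det1.
Qed.

End JacobianComp.

Section LipschitzJacobian.
Local Open Scope classical_set_scope.
Variables (R : realType) (s : nat).
Implicit Types (f : 'rV[R]_s -> 'rV[R]_s) (L : R).

Lemma derive_lipschitz_le f L a v :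
  eucl_lipschitz L f -> derivable f a v -> eucl_norm ('D_v f a) <= L * eucl_norm v.
Proof.
move=> Lf dfv.
have closed_ball : closed [set w : 'rV[R]_s | eucl_norm w <= L * eucl_norm v].
  apply: (@preimage_closed _ _ (@eucl_norm R s) [set x | x <= L * eucl_norm v]).
    by move=> w _; exact: eucl_norm_continuous.
  exact: closed_le.
have quotient_cvg :
    (fun h : R => h^-1 *: ((f \o shift a) (h *: v) - f a)) @ 0^' --> 'D_v f a.
  exact: dfv.
apply: (closed_cvg _ closed_ball _ _ quotient_cvg).
near=> h.
have h0 : h != 0 by near: h; exact: nbhs_dnbhs_neq.
rewrite /= eucl_normZ normfV mulrC ler_pdivrMr ?normr_gt0 //.
apply: le_trans (Lf _ _) _.
by rewrite addrK eucl_normZ mulrCA mulrC.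
Unshelve. all: by end_near.
Qed.

Lemma det_jacobian_le f L a :
  eucl_lipschitz L f -> differentiable f a -> `|\det (jacobian f a)| <= L ^+ s.
Proof.
move=> Lf df; apply: det_le_row_bound => i.
rewrite rowE -deriveEjacobian //.
have := derive_lipschitz_le Lf (diff_derivable (v := delta_mx 0 i) df).
by rewrite eucl_norm_delta mulr1.
Qed.

End LipschitzJacobian.

Lemma eucl_lipschitz_gt0 (R : realType) n (f : 'rV[R]_n.+1 -> 'rV[R]_n.+1) L :
  injective f -> eucl_lipschitz L f -> 0 < L.
Proof.
move=> f_inj Lf; have := Lf (delta_mx 0 0) 0; rewrite subr0 eucl_norm_delta mulr1.
by apply: lt_le_trans; rewrite eucl_norm_gt0 // subr_eq0 (inj_eq f_inj) delta_mx_neq0.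
Qed.

Section IsotropicNormal.
Variables (R : realType) (s : nat).
Implicit Types (mu p x y : 'rV[R]_s).

Lemma std_normal_pdf_ge0 x : 0 <= std_normal_pdf x.
Proof. by rewrite mulr_ge0 ?expR_ge0 // exprn_ge0 // invr_ge0 sqrtr_ge0. Qed.

Lemma std_normal_pdf_le x y :
  eucl_norm x <= eucl_norm y -> std_normal_pdf y <= std_normal_pdf x.
Proof.
move=> xy; rewrite /std_normal_pdf /normal_iso_pdf !subr0 mulr1.
rewrite ler_pM2l ?exprn_gt0 ?invr_gt0 ?sqrtr_gt0 ?mulr_gt0 ?pi_gt0 // ler_expR.
by rewrite ler_pM2r // lerN2 ler_sqr ?nnegrE ?eucl_norm_ge0.
Qed.

Lemma normal_iso_pdf_sqr mu c p : 0 < c ->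
  normal_iso_pdf mu (c ^+ 2) p = (c ^+ s)^-1 * std_normal_pdf (c^-1 *: (p - mu)).
Proof.
move=> c0; rewrite /std_normal_pdf /normal_iso_pdf subr0 mulr1.
rewrite eucl_normZ gtr0_norm ?invr_gt0 //.
rewrite sqrtrM ?mulr_ge0 ?pi_ge0 // sqrtr_sqr gtr0_norm // invfM.
rewrite expr_div_n [_ / c ^+ s]mulrC -mulrA; congr (_ * (_ * expR _)).
by rewrite exprMn exprVn; field; rewrite gt_eqF.
Qed.

Lemma normal_iso_pdf_dim0 (mu p : 'rV[R]_0) v : normal_iso_pdf mu v p = 1.
Proof. by rewrite /normal_iso_pdf /eucl_norm big_ord0 sqrtr0 expr0n oppr0 mul0r expR0 mulr1. Qed.

End IsotropicNormal.

Lemma inv_le_normr_of_mulr_eq1 (R : numFieldType) (x y k : R) :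
  x * y = 1 -> `|y| <= k -> k^-1 <= `|x|.
Proof.
move=> xy1 yk; have y0 : y != 0.
  by apply: contra_eq_neq xy1 => ->; rewrite mulr0 eq_sym oner_neq0.
have -> : x = y^-1 by apply: (mulIf y0); rewrite xy1 mulVf.
have y_gt0 : 0 < `|y| by rewrite normr_gt0.
by rewrite normfV lef_pV2 ?posrE // (lt_le_trans y_gt0).
Qed.

Section PushforwardBounds.
Variables (R : realType) (s : nat) (T Tinv : 'rV[R]_s -> 'rV[R]_s) (K L : R).
Hypotheses (TK : cancel T Tinv) (TinvK : cancel Tinv T).
Hypotheses (dT : forall x, differentiable T x) (dTinv : forall x, differentiable Tinv x).
Hypotheses (LT : eucl_lipschitz K T) (LTinv : eucl_lipschitz L Tinv).
Hypotheses (K_gt0 : 0 < K) (L_gt0 : 0 < L).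
Variable p : 'rV[R]_s.

Lemma det_jacobian_inv_ge : (K ^+ s)^-1 <= `|\det (jacobian Tinv p)|.
Proof.
have dd' : \det (jacobian Tinv p) * \det (jacobian T (Tinv p)) = 1.
  exact: det_jacobian_cancel.
by apply: inv_le_normr_of_mulr_eq1 dd' _; apply: det_jacobian_le.
Qed.

Lemma pushforward_pdf_ge :
  (L ^+ s * K ^+ s)^-1 * normal_iso_pdf (T 0) (L ^+ 2)^-1 p <= pushforward_pdf Tinv p.
Proof.
set X := std_normal_pdf (L *: (p - T 0)).
rewrite -exprVn normal_iso_pdf_sqr ?invr_gt0 // invrK -/X.
have -> : (L ^+ s * K ^+ s)^-1 * ((L^-1 ^+ s)^-1 * X) = X * (K ^+ s)^-1.
  by rewrite exprVn invrK; field; rewrite !gt_eqF ?exprn_gt0.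
apply: ler_pM; [exact: std_normal_pdf_ge0 | by rewrite invr_ge0 exprn_ge0 ?ltW | |].
- apply: std_normal_pdf_le; rewrite eucl_normZ gtr0_norm //.
  by have := LTinv p (T 0); rewrite TK subr0.
- exact: det_jacobian_inv_ge.
Qed.

Lemma pushforward_pdf_le :
  pushforward_pdf Tinv p <= L ^+ s * K ^+ s * normal_iso_pdf (T 0) (K ^+ 2) p.
Proof.
set Y := std_normal_pdf (K^-1 *: (p - T 0)).
rewrite normal_iso_pdf_sqr // -/Y.
have -> : L ^+ s * K ^+ s * ((K ^+ s)^-1 * Y) = Y * L ^+ s.
  by field; rewrite gt_eqF ?exprn_gt0.
apply: ler_pM; [exact: std_normal_pdf_ge0 | exact: normr_ge0 | |].
- apply: std_normal_pdf_le; rewrite eucl_normZ gtr0_norm ?invr_gt0 // ler_pdivrMl //.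
  by have := LT (Tinv p) 0; rewrite TinvK subr0.
- exact: det_jacobian_le.
Qed.

End PushforwardBounds.

Theorem lemma2 (R : realType) (s : nat) (T Tinv : 'rV[R]_s -> 'rV[R]_s) (K L : R) :
  diffeomorphism T Tinv ->
  eucl_lipschitz K T -> eucl_lipschitz L Tinv ->
  forall p : 'rV[R]_s,
    (L ^+ s * K ^+ s)^-1 * normal_iso_pdf (T 0) (L ^+ 2)^-1 p
      <= pushforward_pdf Tinv p /\
    pushforward_pdf Tinv p <= L ^+ s * K ^+ s * normal_iso_pdf (T 0) (K ^+ 2) p.
Proof.
case=> TK TinvK dT dTinv _ LT LTinv p.
case: s => [|n] in T Tinv TK TinvK dT dTinv LT LTinv p *.
  (* In dimension 0 the constants K and L may be nonpositive, but every
     density involved equals 1. *)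
  rewrite /pushforward_pdf /std_normal_pdf !normal_iso_pdf_dim0 det_mx00 normr1.
  by rewrite !expr0 !mulr1 invr1 lexx.
have K_gt0 := eucl_lipschitz_gt0 (can_inj TK) LT.
have L_gt0 := eucl_lipschitz_gt0 (can_inj TinvK) LTinv.
split; [exact: pushforward_pdf_ge | exact: pushforward_pdf_le].
Qed.
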